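(* Let $k\ge 0$ be an integer and let $\sigma$ be a maximal simplex of $\mathrm{VR}(\mathbb{Z}^2;k)$. Then there is a point $c\in\mathbb{R}^2$, each of whose coordinates is an integer or a half-integer, such that $\sigma=B_{\mathbb{R}^2}[c,\tfrac{k}{2}]\cap\mathbb{Z}^2$.
   Context: $\mathbb{Z}^2$ and $\mathbb{R}^2$ carry the $l^1$ metric $d((x,y),(x',y'))=|x-x'|+|y-y'|$, and $B_{\mathbb{R}^2}[c,r]=\{p\in\mathbb{R}^2: d(p,c)\le r\}$. $\mathrm{VR}(X;r)$ is the simplicial complex on vertex set $X$ whose simplices are the finite nonempty subsets of diameter at most $r$; a maximal simplex is one not properly contained in another simplex. A half-integer is a number of the form $m+\tfrac12$ with $m\in\mathbb{Z}$. *)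

From Stdlib Require Export ZArith Reals List.

Definition zpt := (Z * Z)%type.

Definition zdist (p q : zpt) : Z :=
  (Z.abs (fst p - fst q) + Z.abs (snd p - snd q))%Z.

Definition rdist (p q : R * R) : R :=
  (Rabs (fst p - fst q) + Rabs (snd p - snd q))%R.

Definition zpt_to_R (p : zpt) : R * R := (IZR (fst p), IZR (snd p)).

Definition closed_ballR (c : R * R) (r : R) (p : R * R) : Prop := (rdist p c <= r)%R.

Definition finite_set (S : zpt -> Prop) : Prop :=
  exists l : list zpt, forall x, S x <-> In x l.

Definition VR_simplex (r : R) (S : zpt -> Prop) : Prop :=
  finite_set S /\ (exists x, S x) /\
  forall p q, S p -> S q -> (IZR (zdist p q) <= r)%R.

Definition VR_maximal_simplex (r : R) (S : zpt -> Prop) : Prop :=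
  VR_simplex r S /\
  forall T, VR_simplex r T -> (forall x, S x -> T x) -> (forall x, T x -> S x).

Definition int_or_half_int (x : R) : Prop := exists m : Z, x = (IZR m / 2)%R.

(* In the rotated coordinates u = x + y, v = x - y the l^1 distance on Z^2 becomes the
   l^infinity distance, so a set of diameter at most k lies in the "diamond"
   a <= u <= a + k, b <= v <= b + k, where a and b are the minima of u and v over the set.
   The diamond itself has diameter at most k, so a maximal simplex equals its diamond, and
   the diamond is exactly the set of lattice points of the l^1 ball of radius k/2 centred at
   ((a + b + k)/2, (a - b)/2). *)
From Stdlib Require Import ZArith Reals List Lia Lra.

Lemma list_argmin {A : Type} (f : A -> Z) (l : list A) (x : A) :
  In x l -> exists m, In m l /\ forall y, In y l -> (f m <= f y)%Z.
Proof.
  revert x; induction l as [|h t IH]; intros x Hx; [destruct Hx|].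
  destruct t as [|h' t].
  - exists h; split; [now left|]. intros y [<-|[]]; lia.
  - destruct (IH h' (or_introl eq_refl)) as [m [Hm Hmin]].
    destruct (Z.le_gt_cases (f h) (f m)).
    + exists h; split; [now left|]. intros y [<-|Hy]; [lia|].
      specialize (Hmin y Hy); lia.
    + exists m; split; [now right|]. intros y [<-|Hy]; [lia|auto].
Qed.

Definition zrange (lo : Z) (n : nat) : list Z :=
  map (fun i => (lo + Z.of_nat i)%Z) (seq 0 n).

Lemma in_zrange (lo : Z) (n : nat) (z : Z) :
  (lo <= z < lo + Z.of_nat n)%Z -> In z (zrange lo n).
Proof.
  intros H. apply in_map_iff. exists (Z.to_nat (z - lo)).
  split; [lia|]. apply in_seq. lia.
Qed.

Lemma finite_set_of_bounded (S : zpt -> Prop) (S_dec : forall p, {S p} + {~ S p})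
    (x0 y0 : Z) (n : nat) :
  (forall p, S p ->
     (x0 <= fst p < x0 + Z.of_nat n)%Z /\ (y0 <= snd p < y0 + Z.of_nat n)%Z) ->
  finite_set S.
Proof.
  intros Hbound.
  exists (filter (fun p => if S_dec p then true else false)
            (list_prod (zrange x0 n) (zrange y0 n))).
  intros p. rewrite filter_In. destruct (S_dec p) as [Hp|Hp].
  - split; [|tauto]. intros _. split; [|reflexivity].
    destruct (Hbound p Hp). destruct p; apply in_prod; apply in_zrange; assumption.
  - split; [tauto|]. intros [_ Hf]; discriminate.
Qed.

Definition diag_sum (p : zpt) : Z := (fst p + snd p)%Z.
Definition diag_diff (p : zpt) : Z := (fst p - snd p)%Z.

Lemma zdist_diag (p q : zpt) :
  zdist p q = Z.max (Z.abs (diag_sum p - diag_sum q)) (Z.abs (diag_diff p - diag_diff q)).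
Proof. unfold zdist, diag_sum, diag_diff; lia. Qed.

Definition diamond (a b K : Z) (p : zpt) : Prop :=
  (a <= diag_sum p <= a + K)%Z /\ (b <= diag_diff p <= b + K)%Z.

Lemma diamond_dec (a b K : Z) (p : zpt) : {diamond a b K p} + {~ diamond a b K p}.
Proof.
  unfold diamond.
  destruct (Z_le_dec a (diag_sum p)), (Z_le_dec (diag_sum p) (a + K)),
    (Z_le_dec b (diag_diff p)), (Z_le_dec (diag_diff p) (b + K));
    (left; lia) || (right; lia).
Qed.

Lemma zdist_diamond_le (a b K : Z) (p q : zpt) :
  diamond a b K p -> diamond a b K q -> (zdist p q <= K)%Z.
Proof. unfold diamond; rewrite zdist_diag; lia. Qed.

Lemma diamond_finite (a b K : Z) (p0 : zpt) :
  diamond a b K p0 -> finite_set (diamond a b K).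
Proof.
  intros H0.
  apply (finite_set_of_bounded _ (diamond_dec a b K)
           (fst p0 - K) (snd p0 - K) (Z.to_nat (2 * K + 1))).
  intros p Hp. pose proof (zdist_diamond_le a b K p p0 Hp H0).
  unfold zdist, diamond, diag_sum, diag_diff in *; lia.
Qed.

Lemma VR_simplex_iff_zdist (k : nat) (S : zpt -> Prop) :
  VR_simplex (INR k) S <->
  finite_set S /\ (exists x, S x) /\
  forall p q, S p -> S q -> (zdist p q <= Z.of_nat k)%Z.
Proof.
  unfold VR_simplex. rewrite INR_IZR_INZ.
  split; intros [Hfin [Hne Hd]]; repeat split; auto; intros p q Hp Hq.
  - apply le_IZR; auto.
  - apply IZR_le; auto.
Qed.

Lemma VR_simplex_diamond (k : nat) (a b : Z) (p0 : zpt) :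
  diamond a b (Z.of_nat k) p0 -> VR_simplex (INR k) (diamond a b (Z.of_nat k)).
Proof.
  intros H0. apply VR_simplex_iff_zdist. repeat split.
  - exact (diamond_finite _ _ _ p0 H0).
  - now exists p0.
  - apply zdist_diamond_le.
Qed.

Lemma VR_simplex_sub_diamond (k : nat) (S : zpt -> Prop) :
  VR_simplex (INR k) S -> exists a b, forall p, S p -> diamond a b (Z.of_nat k) p.
Proof.
  intros [[l Hl] [[x0 Hx0] Hd]]%VR_simplex_iff_zdist.
  destruct (list_argmin diag_sum l x0 (proj1 (Hl x0) Hx0)) as [pa [Hpa Hmin_a]].
  destruct (list_argmin diag_diff l x0 (proj1 (Hl x0) Hx0)) as [pb [Hpb Hmin_b]].
  exists (diag_sum pa), (diag_diff pb). intros p Hp.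
  apply Hl in Hpa as Hpa', Hpb as Hpb'.
  pose proof (Hmin_a p (proj1 (Hl p) Hp)). pose proof (Hmin_b p (proj1 (Hl p) Hp)).
  pose proof (Hd p pa Hp Hpa'). pose proof (Hd p pb Hp Hpb').
  rewrite zdist_diag in *. unfold diamond; lia.
Qed.

Lemma VR_maximal_simplex_diamond (k : nat) (S : zpt -> Prop) :
  VR_maximal_simplex (INR k) S ->
  exists a b, forall p, S p <-> diamond a b (Z.of_nat k) p.
Proof.
  intros [HS Hmax].
  destruct (VR_simplex_sub_diamond k S HS) as [a [b Hsub]].
  destruct HS as [_ [[x0 Hx0] _]].
  exists a, b. intros p. split; [apply Hsub|].
  exact (Hmax _ (VR_simplex_diamond k a b x0 (Hsub x0 Hx0)) Hsub p).
Qed.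

Lemma Rabs_IZR_sub_half (x m : Z) :
  Rabs (IZR x - IZR m / 2) = (IZR (Z.abs (2 * x - m)) / 2)%R.
Proof.
  replace (IZR x - IZR m / 2)%R with (IZR (2 * x - m) / 2)%R
    by (rewrite minus_IZR, mult_IZR; field).
  rewrite abs_IZR. unfold Rdiv. rewrite Rabs_mult, (Rabs_right (/ 2)); [reflexivity|lra].
Qed.

Lemma diamond_iff_closed_ball (a b K : Z) (p : zpt) :
  diamond a b K p <->
  closed_ballR (IZR (a + b + K) / 2, IZR (a - b) / 2)%R (IZR K / 2) (zpt_to_R p).
Proof.
  unfold closed_ballR, rdist, zpt_to_R; simpl.
  rewrite !Rabs_IZR_sub_half.
  transitivity (Z.abs (2 * fst p - (a + b + K)) + Z.abs (2 * snd p - (a - b)) <= K)%Z.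
  - unfold diamond, diag_sum, diag_diff; lia.
  - split; intros H.
    + apply IZR_le in H. rewrite plus_IZR in H. lra.
    + apply le_IZR. rewrite plus_IZR. lra.
Qed.

Theorem lemma4p1 (k : nat) (sigma : zpt -> Prop) :
  VR_maximal_simplex (INR k) sigma ->
  exists c : R * R,
    int_or_half_int (fst c) /\ int_or_half_int (snd c) /\
    (forall p : zpt, sigma p <-> closed_ballR c (INR k / 2) (zpt_to_R p)).
Proof.
  intros Hmax.
  destruct (VR_maximal_simplex_diamond k sigma Hmax) as [a [b Hdiamond]].
  exists (IZR (a + b + Z.of_nat k) / 2, IZR (a - b) / 2)%R.
  split; [eexists; reflexivity|]. split; [eexists; reflexivity|].
  intros p. rewrite Hdiamond, INR_IZR_INZ. apply diamond_iff_closed_ball.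
Qed.
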